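(* Let $G$ be a connected weighted multigraph on the vertex set $V$, $|V|=n\ge2$, with positive edge weights, weighted adjacency matrix $A$, spectral radius $\rho$ and Perron vector $p$. Let $d^{LW}(i,j)=\lim_{\alpha\to\infty}d^{W}_\alpha(i,j)$ be the long walk distance. Then for all distinct $i,j\in V$, $$d^{LW}(i,j)=n^{-1}\Bigl[(\rho I-B_{jj})^{-1}_i+(\rho I-B_{ii})^{-1}_j\Bigr]\mathbf 1,$$ where $B=P^{-1}AP$, $P=\operatorname{diag}p$, and $\mathbf 1$ is the vector of $n-1$ ones.
   Context: $A=(a_{ij})$ has $a_{ij}$ equal to the sum of weights of the edges joining $i$ and $j$ (loops, multiple edges allowed). The Perron vector $p$ is the positive eigenvector of $A$ for $\rho$ with entries summing to 1. For $\alpha>0$, $t=(\rho+\alpha^{-1})^{-1}$, $R_t=(I-tA)^{-1}=(r_{ij}(t))$, and $d^{W}_\alpha(i,j)=\theta\bigl(\tfrac12(\ln r_{ii}(t)+\ln r_{jj}(t))-\ln r_{ij}(t)\bigr)$ with $\theta=\ln(e+\alpha^{2/n})\frac{\alpha-1}{\ln\alpha}$ ($\theta=\ln(e+1)$ at $\alpha=1$); the limit defining $d^{LW}$ exists. Matrices are indexed by vertices; $M_{jj}$ is $M$ with row and column $j$ deleted; $N^{-1}_i$ is the row of $N^{-1}$ indexed by $i$. *)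

From HB Require Import structures.
From mathcomp Require Import all_boot all_order all_algebra.
From mathcomp Require Import all_classical all_reals all_analysis.
Set Implicit Arguments. Unset Strict Implicit. Unset Printing Implicit Defensive.
Import Order.TTheory GRing.Theory Num.Theory.
Local Open Scope ring_scope.

(* A weighted multigraph with positive weights on vertex set 'I_n is encoded by
   its weighted adjacency matrix A: a_ij = total weight of edges joining i, j. *)
Definition weighted_adjacency (R : realType) (n : nat) (A : 'M[R]_n) : Prop :=
  A^T = A /\ forall i j, 0 <= A i j.

Definition connected_graph (R : realType) (n : nat) (A : 'M[R]_n) : Prop :=
  forall i j : 'I_n, connect [rel k l | 0 < A k l] i j.

Definition spectral_radius (R : realType) (n : nat) (A : 'M[R]_n) (rho : R) : Prop :=
  eigenvalue A rho /\ forall l, eigenvalue A l -> `|l| <= rho.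

Definition perron_vector (R : realType) (n : nat) (A : 'M[R]_n) (rho : R)
  (p : 'cV[R]_n) : Prop :=
  [/\ forall i, 0 < p i 0, \sum_i p i 0 = 1 & A *m p = rho *: p].

Definition walk_dist (R : realType) (n : nat) (A : 'M[R]_n) (rho alpha : R)
  (i j : 'I_n) : R :=
  let t := (rho + alpha^-1)^-1 in
  let Rt := invmx (1%:M - t *: A) in
  let theta := if alpha == 1 then ln (expR 1 + 1)
               else ln (expR 1 + alpha `^ (2 / n%:R)) * (alpha - 1) / ln alpha in
  theta * ((ln (Rt i i) + ln (Rt j j)) / 2 - ln (Rt i j)).

(* B = P^-1 A P with P = diag p *)
Definition Bmx (R : realType) (n : nat) (A : 'M[R]_n) (p : 'cV[R]_n) : 'M[R]_n :=
  \matrix_(k, l) ((p k 0)^-1 * A k l * p l 0).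

(* M_jj : M with row and column j deleted (rows/cols indexed by V \ {j}) *)
Definition delmx (R : realType) (n : nat) (j : 'I_n) (M : 'M[R]_n) : 'M[R]_n.-1 :=
  \matrix_(k, l) M (lift j k) (lift j l).

(* N_i 1 : sum of the entries of the row of N (indexed by V \ {j}) indexed by
   the vertex i <> j *)
Definition rowsum_at (R : realType) (n : nat) (j i : 'I_n) (N : 'M[R]_n.-1) : R :=
  \sum_(a : 'I_n.-1 | lift j a == i) \sum_(b : 'I_n.-1) N a b.

From HB Require Import structures.
From mathcomp Require Import all_boot all_order all_algebra.
From mathcomp Require Import all_classical all_reals all_analysis.
From mathcomp Require Import ring lra.
Import Order.TTheory GRing.Theory Num.Theory.
Import numFieldNormedType.Exports.
Local Open Scope classical_set_scope.
Local Open Scope ring_scope.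

(* Let t = (rho + 1/alpha)^-1, which increases to 1/rho, and R_t = (I - t A)^-1.  Eliminating
   vertex j from (I - t A) R_t = I gives R_t(i,j) = g_j(t)_i R_t(j,j), where
   g_j(t) = t (I - t A_jj)^-1 a_j and a_j is the j-th column of A off j.  As R_t is symmetric,
   the bracket in d^W_alpha(i,j) is -(ln g_j(t)_i + ln g_i(t)_j) / 2.  Connectivity keeps rho
   out of the spectrum of A_jj, so g_j is smooth at 1/rho, where it equals p / p_j; the two
   logarithms then cancel, and d^W_alpha(i,j) is theta(alpha) (1/rho - t), which tends to
   2/(n rho^2), times the mean of two difference quotients of ln g.  The resolvent identity
   gives g_j'(1/rho) = (I - A_jj/rho)^-2 a_j, which conjugation by diag p turns into rho^2/p_j
   times the row sums of (rho I - B_jj)^-1. *)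

Section MatrixLimits.
Context {R : numFieldType} {T : Type} {F : set_system T} {FF : Filter F}.

Lemma cvg_det {m} {M : T -> 'M[R]_m} {M0 : 'M[R]_m} :
  (forall i j, M x i j @[x --> F] --> M0 i j) -> \det (M x) @[x --> F] --> \det M0.
Proof.
move=> MM0; apply: cvg_big => //; first exact: add_continuous.
move=> s _; apply: cvgMl_tmp.
by apply: cvg_big => //; first exact: mul_continuous.
Qed.

Lemma near_unitmx {m} {M : T -> 'M[R]_m} {M0 : 'M[R]_m} :
  (forall i j, M x i j @[x --> F] --> M0 i j) -> M0 \in unitmx ->
  \forall x \near F, M x \in unitmx.
Proof.
move=> /cvg_det MM0; rewrite unitmxE unitfE => M0_neq0.
by apply: filterS (cvgr_neq0 _ MM0 M0_neq0) => x; rewrite unitmxE unitfE.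
Qed.

Lemma cvg_invmx {m} {M : T -> 'M[R]_m} {M0 : 'M[R]_m} :
  (forall i j, M x i j @[x --> F] --> M0 i j) -> M0 \in unitmx ->
  forall i j, invmx (M x) i j @[x --> F] --> invmx M0 i j.
Proof.
move=> MM0 U0 i j.
have cofactor_cvg : cofactor (M x) j i @[x --> F] --> cofactor M0 j i.
  apply: cvgMl_tmp; apply: cvg_det => k l.
  by rewrite !mxE; under eq_cvg do rewrite !mxE; exact: MM0.
have det_neq0 : \det M0 != 0 by rewrite -unitfE -unitmxE.
have -> : invmx M0 i j = (\det M0)^-1 * cofactor M0 j i by rewrite /invmx U0 !mxE.
apply: cvg_trans (near_eq_cvg _) (cvgM (cvgV det_neq0 (cvg_det MM0)) cofactor_cvg).
near=> x; have Ux : M x \in unitmx by near: x; exact: near_unitmx.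
by rewrite /invmx Ux !mxE.
Unshelve. all: by end_near.
Qed.

Lemma cvg_mulmxr {m k l} {X : T -> 'M[R]_(m, k)} {X0 : 'M[R]_(m, k)} {C : 'M[R]_(k, l)} :
  (forall i j, X x i j @[x --> F] --> X0 i j) ->
  forall i j, (X x *m C) i j @[x --> F] --> (X0 *m C) i j.
Proof.
move=> XX0 i j; rewrite mxE; under eq_cvg do rewrite mxE.
apply: cvg_big => //; first exact: add_continuous.
by move=> b _; apply: cvgMr_tmp.
Qed.

End MatrixLimits.

Section LnLimits.
Context {R : realType}.

Lemma lnB_ge_div {x a : R} : 0 < x -> 0 < a -> (x - a) / x <= ln x - ln a.
Proof.
move=> x_gt0 a_gt0.
have := @le_ln1Dx R (a / x - 1).
rewrite [1 + _]addrC subrK ln_div ?posrE //.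
have : 0 < a / x by exact: divr_gt0.
have -> : (x - a) / x = - (a / x - 1) by field; rewrite lt0r_neq0.
by move=> ax_gt0 /(_ _); lra.
Qed.

Lemma lnB_le_div {x a : R} : 0 < x -> 0 < a -> ln x - ln a <= (x - a) / a.
Proof.
move=> x_gt0 a_gt0.
have := @le_ln1Dx R (x / a - 1).
rewrite [1 + _]addrC subrK ln_div ?posrE //.
have : 0 < x / a by exact: divr_gt0.
have -> : (x - a) / a = x / a - 1 by field; rewrite lt0r_neq0.
by move=> xa_gt0 /(_ _); lra.
Qed.

Context {T : Type} {F : set_system T} {FF : Filter F}.

Lemma cvg_subr_eq_mul {x s v : T -> R} {x0 d : R} :
  s y @[y --> F] --> 0 -> v y @[y --> F] --> d ->
  (\forall y \near F, x0 - x y = s y * v y) -> x y @[y --> F] --> x0.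
Proof.
move=> s0 vd near_x0E.
have : x0 - s y * v y @[y --> F] --> x0 - 0 * d by apply: cvgB; [exact: cvg_cst | exact: cvgM].
rewrite mul0r subr0; apply: cvg_trans; apply: near_eq_cvg.
near=> y; have x0E : x0 - x y = s y * v y by near: y.
by rewrite /= -x0E opprB addrC subrK.
Unshelve. all: by end_near.
Qed.

(* Squeeze between the bounds of [lnB_ge_div] and [lnB_le_div]. *)
Lemma cvg_lnB_div {x s v : T -> R} {x0 d : R} :
  0 < x0 -> x y @[y --> F] --> x0 -> v y @[y --> F] --> d ->
  (\forall y \near F, 0 < s y /\ x0 - x y = s y * v y) ->
  (ln x0 - ln (x y)) / s y @[y --> F] --> d / x0.
Proof.
move=> x0_gt0 xx0 vd sv.
have x_gt0 : \forall y \near F, 0 < x y by apply: cvgr_gt xx0 _ x0_gt0.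
apply: (@squeeze_cvgr _ _ _ _ (fun y => v y / x0) (fun y => v y / x y)).
- near=> y; have [s_gt0 x0E] : 0 < s y /\ x0 - x y = s y * v y by near: y.
  have xy_gt0 : 0 < x y by near: y.
  have := lnB_ge_div x0_gt0 xy_gt0; have := lnB_le_div x0_gt0 xy_gt0.
  rewrite x0E => le_up le_lo.
  rewrite ler_pdivlMr // ler_pdivrMr //.
  by rewrite [v y / x0 * _]mulrAC [v y / x y * _]mulrAC (mulrC (v y)) le_lo le_up.
- by apply: cvgMr_tmp.
- by apply: cvgM => //; exact: cvgV (lt0r_neq0 x0_gt0) xx0.
Unshelve. all: by end_near.
Qed.

End LnLimits.

Section LimitsAtInfinity.
Context {R : realType}.

Lemma cvgy_invr : (x : R)^-1 @[x --> +oo] --> 0.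
Proof.
apply/gtr0_cvgV0; last exact: cvg_id.
by near=> x; near: x; apply: nbhs_pinfty_gt; rewrite num_real.
Unshelve. all: by end_near.
Qed.

Lemma cvgy_ln : ln (x : R) @[x --> +oo] --> +oo.
Proof.
apply/cvgryPge => M; near=> x.
have expM_lt : expR M < x by near: x; apply: nbhs_pinfty_gt; rewrite num_real.
by rewrite -ler_expR lnK ?posrE ?ltW // (lt_trans _ expM_lt) // expR_gt0.
Unshelve. all: by end_near.
Qed.

(* For [x >= 1]: [c ln x <= ln (e + x^c) <= ln ((1 + e) x^c) = c ln x + ln (1 + e)]. *)
Lemma cvgy_ln_expR1D_powR {c : R} : 0 < c ->
  ln (expR 1 + x `^ c) / ln x @[x --> +oo] --> c.
Proof.
move=> c_gt0.
have upper_cvg : c + ln (1 + expR 1) * (ln (x : R))^-1 @[x --> +oo] --> c.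
  rewrite -[X in _ --> X]addr0; apply: cvgD; first exact: cvg_cst.
  rewrite -[X in _ --> X](mulr0 (ln (1 + expR 1))); apply: cvgMl_tmp.
  apply/gtr0_cvgV0; last exact: cvgy_ln.
  by near=> x; apply: ln_gt0; near: x; apply: nbhs_pinfty_gt; rewrite num_real.
apply: (squeeze_cvgr _ (cvg_cst c) upper_cvg); near=> x.
have x_gt1 : 1 < x by near: x; apply: nbhs_pinfty_gt; rewrite num_real.
have x_gt0 : 0 < x by apply: lt_trans x_gt1.
have lnx_gt0 : 0 < ln x by apply: ln_gt0.
have xc_gt0 : 0 < x `^ c by apply: powR_gt0.
have ln_xc : ln (x `^ c) = c * ln x by rewrite ln_powR.
have xc_ge1 : 1 <= x `^ c by rewrite -(lnK xc_gt0) -expR0 ler_expR ln_xc mulr_ge0 // ltW.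
have e_gt0 : 0 < expR (1 : R) by apply: expR_gt0.
apply/andP; split.
  by rewrite ler_pdivlMr // -ln_xc ler_ln ?posrE ?addr_gt0 // lerDr ltW.
rewrite ler_pdivrMr // mulrDl -mulrA mulVf ?lt0r_neq0 // mulr1 -ln_xc.
rewrite -lnM ?posrE ?addr_gt0 // ler_ln ?posrE ?addr_gt0 ?mulr_gt0 //.
nra.
Unshelve. all: by end_near.
Qed.

Definition walk_theta (m : nat) (a : R) : R :=
  if a == 1 then ln (expR 1 + 1)
  else ln (expR 1 + a `^ (2 / m%:R)) * (a - 1) / ln a.

Variable rho : R.
Hypothesis rho_gt0 : 0 < rho.

Definition walk_t (a : R) : R := (rho + a^-1)^-1.

Lemma walk_t_cvg : walk_t a @[a --> +oo] --> rho^-1.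
Proof.
apply: cvgV; first by rewrite lt0r_neq0.
by rewrite -[X in _ --> X]addr0; apply: cvgD; [exact: cvg_cst | exact: cvgy_invr].
Qed.

Lemma near_walk_t : \forall a \near +oo, 0 < walk_t a < rho^-1.
Proof.
near=> a; have a_gt0 : 0 < a by near: a; apply: nbhs_pinfty_gt; rewrite num_real.
rewrite /walk_t invr_gt0 addr_gt0 ?invr_gt0 //=.
by rewrite ltf_pV2 ?posrE ?addr_gt0 ?invr_gt0 // ltrDl invr_gt0.
Unshelve. all: by end_near.
Qed.

Lemma walk_theta_gap_cvg {m : nat} : (0 < m)%N ->
  walk_theta m a * (rho^-1 - walk_t a) @[a --> +oo] --> 2 / m%:R / rho ^+ 2.
Proof.
move=> m_gt0.
have c_gt0 : 0 < 2 / m%:R :> R by rewrite divr_gt0 // ltr0n.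
have gap_cvg : (1 - a^-1) / (rho * (rho + a^-1)) @[a --> +oo] --> (1 - 0) / (rho * (rho + 0)).
  apply: cvgM; first by apply: cvgB; [exact: cvg_cst | exact: cvgy_invr].
  apply: cvgV; first by rewrite addr0 mulf_neq0 // lt0r_neq0.
  by apply: cvgMl_tmp; apply: cvgD; [exact: cvg_cst | exact: cvgy_invr].
have -> : 2 / m%:R / rho ^+ 2 = 2 / m%:R * ((1 - 0) / (rho * (rho + 0))).
  by rewrite subr0 addr0 expr2 mul1r.
have prod_cvg := cvgM (cvgy_ln_expR1D_powR c_gt0) gap_cvg.
suff E : {near +oo, ((fun x : R => ln (expR 1 + x `^ (2 / m%:R)) / ln x) \*
    (fun a : R => (1 - a^-1) / (rho * (rho + a^-1)))) =1
    (fun a => walk_theta m a * (rho^-1 - walk_t a))}.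
  exact: cvg_trans (near_eq_cvg E) (prod_cvg _).
near=> a. have a_gt1 : 1 < a by near: a; apply: nbhs_pinfty_gt; rewrite num_real.
have a_neq0 : a != 0 by rewrite gt_eqF // (lt_trans _ a_gt1).
have lna_neq0 : ln a != 0 by rewrite gt_eqF // ln_gt0.
have ra_neq0 : rho * a + 1 != 0 by rewrite gt_eqF // addr_gt0 // mulr_gt0 // (lt_trans _ a_gt1).
rewrite /walk_theta /walk_t /= (gt_eqF a_gt1).
have -> : rho + a^-1 = (rho * a + 1) / a by field.
by field; rewrite a_neq0 ra_neq0 lna_neq0 lt0r_neq0.
Unshelve. all: by end_near.
Qed.

End LimitsAtInfinity.

Section ResolventAlgebra.
Context {R : fieldType}.

Lemma resolventB {m} (M : 'M[R]_m) (s t : R) :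
  (1%:M - t *: M) \in unitmx -> (1%:M - s *: M) \in unitmx ->
  invmx (1%:M - t *: M) - invmx (1%:M - s *: M) =
  (t - s) *: (invmx (1%:M - t *: M) *m M *m invmx (1%:M - s *: M)).
Proof.
set Nt := invmx _; set Ns := invmx _ => Ut Us.
have {1}-> : Nt = Nt *m (1%:M - s *: M) *m Ns by rewrite -mulmxA mulmxV // mulmx1.
have {2}-> : Ns = Nt *m (1%:M - t *: M) *m Ns by rewrite mulVmx // mul1mx.
rewrite -mulmxBl -mulmxBr opprB addrC addrA subrK -scalerBl.
by rewrite -scalemxAr -scalemxAl.
Qed.

Lemma scaled_resolventB {m} {M : 'M[R]_m} (c : 'cV[R]_m) {s t : R} :
  (1%:M - t *: M) \in unitmx -> (1%:M - s *: M) \in unitmx ->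
  t *: (invmx (1%:M - t *: M) *m c) - s *: (invmx (1%:M - s *: M) *m c) =
  (t - s) *: (invmx (1%:M - s *: M) *m c +
              t *: (invmx (1%:M - t *: M) *m (M *m (invmx (1%:M - s *: M) *m c)))).
Proof.
move=> Ut Us.
set Nt := invmx (1%:M - t *: M); set Ns := invmx (1%:M - s *: M).
have -> : t *: (Nt *m c) = t *: (Ns *m c) + t *: ((Nt - Ns) *m c).
  by rewrite mulmxBl scalerBr addrC subrK.
rewrite resolventB // -scalemxAl scalerA addrAC -scalerBl scalerDr.
by rewrite scalerA (mulrC t) -!mulmxA.
Qed.

Lemma resolvent_sqrE {m} (M : 'M[R]_m) (c : 'cV[R]_m) (s : R) :
  (1%:M - s *: M) \in unitmx ->
  invmx (1%:M - s *: M) *m c + s *: (invmx (1%:M - s *: M) *m (M *m (invmx (1%:M - s *: M) *m c)))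
  = invmx (1%:M - s *: M) *m (invmx (1%:M - s *: M) *m c).
Proof.
move=> Us; set N := invmx _; set x := N *m c.
have cE : c = (1%:M - s *: M) *m x by rewrite /x /N mulKVmx.
rewrite {1}/x {1}cE scalemxAr -mulmxDr; congr (_ *m _).
by rewrite mulmxBl mul1mx -scalemxAl subrK.
Qed.

Lemma invmx_sym {m} (M : 'M[R]_m) i j : M^T = M -> invmx M i j = invmx M j i.
Proof. by move=> MT; rewrite -{1}MT -trmx_inv mxE. Qed.

End ResolventAlgebra.

Section DeletedVertex.
Context {R : realType}.

Definition offcol {n} (j : 'I_n) (A : 'M[R]_n) : 'cV[R]_n.-1 := \col_k A (lift j k) j.

(* Block elimination on the [j]-th column of [(1 - t A) R_t = 1]. *)
Lemma resolvent_liftE {n} (A : 'M[R]_n) (j : 'I_n) (t : R) (k : 'I_n.-1) :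
  (1%:M - t *: A) \in unitmx -> (1%:M - t *: delmx j A) \in unitmx ->
  invmx (1%:M - t *: A) (lift j k) j =
  (t *: (invmx (1%:M - t *: delmx j A) *m offcol j A)) k 0 * invmx (1%:M - t *: A) j j.
Proof.
move=> U Uj; set Rt := invmx (1%:M - t *: A); set Mj := 1%:M - t *: delmx j A.
pose r : 'cV[R]_n.-1 := \col_b Rt (lift j b) j.
have Mj_r : Mj *m r = (t * Rt j j) *: offcol j A.
  apply/matrixP => a b; rewrite (ord1 b) !mxE.
  have /matrixP /(_ (lift j a) j) := mulmxV U.
  rewrite !mxE (bigD1_ord j) //= eq_sym (negbTE (neq_lift j a)) mulr0n.
  rewrite !mxE eq_sym (negbTE (neq_lift j a)) /= sub0r => /eqP.
  rewrite mulNr addrC addr_eq0 opprK => /eqP E; rewrite mulrAC -E.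
  by apply: eq_bigr => b' _; rewrite !mxE (inj_eq lift_inj).
have rE : r = (t * Rt j j) *: (invmx Mj *m offcol j A) by rewrite scalemxAr -Mj_r mulKmx.
by have /matrixP /(_ k 0) := rE; rewrite !mxE => ->; rewrite mulrAC.
Qed.

Lemma rowsum_at_lift {n} (j : 'I_n) (k : 'I_n.-1) (N : 'M[R]_n.-1) :
  rowsum_at j (lift j k) N = \sum_b N k b.
Proof.
rewrite /rowsum_at (eq_bigl (pred1 k)) ?big_pred1_eq // => a /=.
by rewrite (inj_eq lift_inj).
Qed.

End DeletedVertex.

Section PerronResolvent.
Variables (R : realType) (n : nat) (A : 'M[R]_n) (rho : R) (p : 'cV[R]_n).
Hypothesis n_gt1 : (1 < n)%N.
Hypothesis adjA : weighted_adjacency A.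
Hypothesis connA : connected_graph A.
Hypothesis radiusA : spectral_radius A rho.
Hypothesis perronA : perron_vector A rho p.

Lemma adj_sym k l : A k l = A l k.
Proof. by case: adjA => /matrixP /(_ l k); rewrite mxE. Qed.

Lemma adj_ge0 k l : 0 <= A k l.
Proof. by case: adjA. Qed.

Lemma perron_gt0 k : 0 < p k 0.
Proof. by case: perronA. Qed.

Lemma perron_rowE k : \sum_l A k l * p l 0 = rho * p k 0.
Proof. by case: perronA => _ _ /matrixP /(_ k 0); rewrite !mxE => <-. Qed.

Lemma radius_gt0 : 0 < rho.
Proof.
have [s] := connectP (connA (Ordinal (ltnW n_gt1)) (Ordinal n_gt1)).
case: s => [|l s] /=; first by move=> _ /(congr1 val).
move=> /andP [Akl _] _; set k := Ordinal _ in Akl.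
have : 0 < \sum_l A k l * p l 0.
  rewrite (bigD1 l) //=; apply: ltr_pwDl; first by rewrite mulr_gt0 // perron_gt0.
  by apply: sumr_ge0 => i _; rewrite mulr_ge0 ?adj_ge0 // ltW // perron_gt0.
by rewrite perron_rowE pmulr_lgt0 ?perron_gt0.
Qed.

Lemma resolvent_unitmx {t} : 0 < t < rho^-1 -> (1%:M - t *: A) \in unitmx.
Proof.
move=> /andP [t_gt0 t_lt]; rewrite unitmxE unitfE; apply/negP => /det0P [v v_neq0 /eqP].
rewrite mulmxBr mulmx1 subr_eq0 => /eqP vE.
have : eigenvalue A t^-1.
  apply/eigenvalueP; exists v => //.
  by rewrite {2}vE -scalemxAr scalerA mulVf ?scale1r // gt_eqF.
case: radiusA => _ /[apply]; rewrite gtr0_norm ?invr_gt0 //.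
by move: t_lt; rewrite -ltf_pV2 ?posrE ?invr_gt0 ?radius_gt0 // invrK => /lt_geF ->.
Qed.

Lemma resolvent_colE {t} (j k : 'I_n) : 0 < t < rho^-1 ->
  invmx (1%:M - t *: A) k j = (k == j)%:R + t * \sum_l A k l * invmx (1%:M - t *: A) l j.
Proof.
move=> /resolvent_unitmx /mulmxV; set Rt := invmx _ => RtE.
have {RtE} : Rt - t *: (A *m Rt) = 1%:M by rewrite -RtE mulmxBl mul1mx -scalemxAl.
by move=> /matrixP /(_ k j); rewrite !mxE => <-; rewrite subrK.
Qed.

(* Minimum principle: the smallest ratio [R_t k j / p_k] cannot be negative, since
   [R_t k j >= t (A R_t) k j >= t rho min_l (R_t l j / p_l) p_k] and [t rho < 1]. *)
Lemma resolvent_ge0 {t} (j k : 'I_n) : 0 < t < rho^-1 -> 0 <= invmx (1%:M - t *: A) k j.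
Proof.
move=> t_bounds; have /andP [t_gt0 t_lt] := t_bounds.
set Rt := invmx _; have rho_gt0 := radius_gt0.
have t_rho_lt1 : t * rho < 1 by rewrite -(mulVf (lt0r_neq0 rho_gt0)) ltr_pM2r.
have [k1 _ k1_min] := @arg_minP _ _ _ j predT (fun k => Rt k j / p k 0) isT.
set mu := Rt k1 j / p k1 0 in k1_min.
have mu_le l : mu * p l 0 <= Rt l j by rewrite -ler_pdivlMr ?perron_gt0 //; exact: k1_min.
suff mu_ge0 : 0 <= mu by apply: le_trans (mu_le k); rewrite mulr_ge0 // ltW // perron_gt0.
have k1E : Rt k1 j = mu * p k1 0 by rewrite /mu divfK // gt_eqF // perron_gt0.
clearbody mu.
have : t * mu * rho * p k1 0 <= Rt k1 j.
  rewrite resolvent_colE //; apply: ler_wpDl; first by rewrite ler0n.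
  rewrite -!mulrA ler_pM2l // -perron_rowE big_distrr /=.
  apply: ler_sum => l _; rewrite mulrA (mulrC mu) -mulrA.
  by apply: ler_wpM2l; [exact: adj_ge0 | exact: mu_le].
rewrite k1E => le_mu.
have : 0 <= mu * p k1 0 * (1 - t * rho) by rewrite mulrBr mulr1 subr_ge0; lra.
by rewrite pmulr_lge0 ?subr_gt0 // pmulr_lge0 // perron_gt0.
Qed.

Lemma resolvent_diag_ge1 {t} (j : 'I_n) : 0 < t < rho^-1 -> 1 <= invmx (1%:M - t *: A) j j.
Proof.
move=> t_bounds; have /andP [t_gt0 _] := t_bounds.
rewrite resolvent_colE // eqxx; apply: ler_wpDr => //; apply: mulr_ge0; first exact: ltW.
by apply: sumr_ge0 => l _; rewrite mulr_ge0 ?adj_ge0 ?resolvent_ge0.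
Qed.

Definition perron_del (j : 'I_n) : 'cV[R]_n.-1 := \col_k p (lift j k) 0.

Lemma perron_del_gt0 j k : 0 < perron_del j k 0.
Proof. by rewrite mxE perron_gt0. Qed.

Lemma delmx_perronE j k :
  \sum_l delmx j A k l * perron_del j l 0 = rho * perron_del j k 0 - offcol j A k 0 * p j 0.
Proof.
rewrite !mxE -perron_rowE (bigD1_ord j) //= addrAC subrr add0r.
by apply: eq_bigr => l _; rewrite !mxE.
Qed.

Lemma delmx_perron_pairing j (w : 'I_n.-1 -> R) :
  \sum_l (\sum_k w k * delmx j A k l - rho * w l) * perron_del j l 0 =
  - (p j 0 * \sum_k w k * offcol j A k 0).
Proof.
have swapE : \sum_l (\sum_k w k * delmx j A k l) * perron_del j l 0 =
    \sum_k w k * (rho * perron_del j k 0 - offcol j A k 0 * p j 0).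
  under eq_bigr do rewrite mulr_suml.
  rewrite exchange_big; apply: eq_bigr => k _ /=.
  by rewrite -delmx_perronE mulr_sumr; apply: eq_bigr => l _; rewrite mulrA.
under eq_bigr do rewrite mulrBl.
rewrite sumrB swapE; under eq_bigr do rewrite mulrBr.
rewrite sumrB.
have -> : \sum_k w k * (rho * perron_del j k 0) = \sum_l rho * w l * perron_del j l 0.
  by apply: eq_bigr => k _; rewrite mulrCA mulrA.
rewrite addrAC subrr add0r mulr_sumr; congr (- _).
by apply: eq_bigr => k _; rewrite [RHS]mulrC -mulrA.
Qed.

(* Pairing with the positive vector [perron_del j] turns the subinvariance inequalities
   into equalities, and kills the weight of [w] on the neighbours of [j]. *)
Lemma delmx_subinvariant j {w : 'I_n.-1 -> R} :
  (forall k, 0 <= w k) -> (forall l, rho * w l <= \sum_k w k * delmx j A k l) ->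
  (forall l, \sum_k w k * delmx j A k l = rho * w l) /\
  (forall k, w k * offcol j A k 0 = 0).
Proof.
move=> w_ge0 w_sub.
have terms_ge0 l : 0 <= (\sum_k w k * delmx j A k l - rho * w l) * perron_del j l 0.
  by rewrite mulr_ge0 ?subr_ge0 // ltW // perron_del_gt0.
have offcol_ge0 k : 0 <= w k * offcol j A k 0 by rewrite mulr_ge0 // mxE adj_ge0.
have sum_offcol0 : p j 0 * \sum_k w k * offcol j A k 0 = 0.
  apply/eqP; rewrite eq_le; apply/andP; split.
    by rewrite -oppr_ge0 -delmx_perron_pairing sumr_ge0.
  by rewrite mulr_ge0 ?sumr_ge0 // ltW // perron_gt0.
have pairing0 : \sum_l (\sum_k w k * delmx j A k l - rho * w l) * perron_del j l 0 = 0.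
  by rewrite delmx_perron_pairing sum_offcol0 oppr0.
split => [l|k].
  have /eqP := psumr_eq0P (fun l _ => terms_ge0 l) pairing0 (i := l) isT.
  by rewrite mulf_eq0 (gt_eqF (perron_del_gt0 j l)) orbF subr_eq0 => /eqP.
move: sum_offcol0 => /eqP; rewrite mulf_eq0 (gt_eqF (perron_gt0 j)) /= => /eqP sum0.
exact: (psumr_eq0P (fun k _ => offcol_ge0 k) sum0 (i := k) isT).
Qed.

(* The zero set of [w], together with [j], is closed under adjacency, hence everything. *)
Lemma delmx_subinvariant_eq0 j {w : 'I_n.-1 -> R} :
  (forall k, 0 <= w k) -> (forall l, rho * w l <= \sum_k w k * delmx j A k l) ->
  forall k, w k = 0.
Proof.
move=> w_ge0 w_sub; have [w_inv w_off] := delmx_subinvariant j w_ge0 w_sub.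
pose Z u := if unlift j u is Some k then w k == 0 else true.
have Z_step x y : 0 < A x y -> Z x -> Z y.
  rewrite /Z; case: (unliftP j y) => [l ->|->] // Axy.
  case: (unliftP j x) => [k ->|->] in Axy *; last first.
    by have /eqP := w_off l; rewrite mulf_eq0 mxE adj_sym (gt_eqF Axy) orbF.
  move=> /eqP wk0; have := w_inv k; rewrite wk0 mulr0 => wA0.
  have A'_ge0 i : 0 <= w i * delmx j A i k by rewrite mulr_ge0 // mxE adj_ge0.
  have /eqP := psumr_eq0P (fun i _ => A'_ge0 i) wA0 (i := l) isT.
  by rewrite mulf_eq0 mxE adj_sym (gt_eqF Axy) orbF.
have Z_closed : closed_mem [rel k l | 0 < A k l] (mem [pred u | Z u]).
  move=> x y /= Axy; rewrite !inE; apply/idP/idP; first exact: Z_step.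
  by apply: Z_step; rewrite adj_sym.
move=> k; have := closed_connect Z_closed (connA j (lift j k)).
by rewrite !inE /Z unlift_none liftK => /esym /eqP.
Qed.

Lemma delmx_resolvent_unitmx j : (1%:M - rho^-1 *: delmx j A) \in unitmx.
Proof.
have rho_gt0 := radius_gt0.
rewrite unitmxE unitfE; apply/negP => /det0P [v v_neq0 /eqP].
rewrite mulmxBr mulmx1 subr_eq0 -scalemxAr => /eqP vE.
have vA : v *m delmx j A = rho *: v by rewrite {2}vE scalerA mulfV ?scale1r // gt_eqF.
have w_sub l : rho * `|v 0 l| <= \sum_k `|v 0 k| * delmx j A k l.
  have /matrixP /(_ 0 l) := vA; rewrite !mxE => vAE.
  rewrite -(gtr0_norm rho_gt0) -normrM -vAE; apply: le_trans (ler_norm_sum _ _ _) _.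
  by apply: ler_sum => k _; rewrite normrM [`|delmx _ _ _ _|]ger0_norm // mxE adj_ge0.
have v0 := delmx_subinvariant_eq0 j (fun k => normr_ge0 (v 0 k)) w_sub.
by move/eqP: v_neq0; apply; apply/rowP => k; rewrite mxE; apply/normr0_eq0/v0.
Qed.

Lemma delmx_resolvent_offcol j :
  invmx (1%:M - rho^-1 *: delmx j A) *m offcol j A = (rho / p j 0) *: perron_del j.
Proof.
have rho_gt0 := radius_gt0; have pj_neq0 := lt0r_neq0 (perron_gt0 j).
have M_perron : (1%:M - rho^-1 *: delmx j A) *m perron_del j = (rho^-1 * p j 0) *: offcol j A.
  apply/matrixP => k b; rewrite (ord1 b) mulmxBl mul1mx -scalemxAl !mxE.
  have := delmx_perronE j k; rewrite !mxE => ->.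
  by rewrite mulrBr mulrA mulVf ?lt0r_neq0 // mul1r opprB addrC subrK mulrCA mulrC.
have -> : perron_del j = (rho^-1 * p j 0) *: (invmx (1%:M - rho^-1 *: delmx j A) *m offcol j A).
  by rewrite scalemxAr -M_perron mulKmx // delmx_resolvent_unitmx.
by rewrite scalerA mulrACA mulfV ?lt0r_neq0 // mulVf // mul1r scale1r.
Qed.

(* [B = P^-1 A P], so [1 - rho^-1 A_jj] and [rho - B_jj] are conjugate by [diag p] off [j]. *)
Lemma delmx_Bmx_conj j :
  (1%:M - rho^-1 *: delmx j A) *m diag_mx (perron_del j)^T =
  rho^-1 *: (diag_mx (perron_del j)^T *m (rho%:M - delmx j (Bmx A p))).
Proof.
have rho_neq0 := lt0r_neq0 radius_gt0.
apply/matrixP => a b; rewrite mul_mx_diag mul_diag_mx !mxE.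
have pb_neq0 := lt0r_neq0 (perron_gt0 (lift j b)).
have pa_neq0 := lt0r_neq0 (perron_gt0 (lift j a)).
by case: (eqVneq a b) => [->|_] /=; rewrite ?mulr1n ?mulr0n; field; rewrite ?pa_neq0 ?pb_neq0.
Qed.

(* [resolvent_ratio j t k 0 = R_t (lift j k) j / R_t j j] by [resolvent_liftE]. *)
Definition resolvent_ratio j (t : R) : 'cV[R]_n.-1 :=
  t *: (invmx (1%:M - t *: delmx j A) *m offcol j A).

Definition resolvent_ratio_deriv j : 'cV[R]_n.-1 :=
  invmx (1%:M - rho^-1 *: delmx j A) *m (invmx (1%:M - rho^-1 *: delmx j A) *m offcol j A).

Lemma resolvent_ratio_derivE j k :
  resolvent_ratio_deriv j k 0 =
  rho ^+ 2 / p j 0 * perron_del j k 0 * \sum_b invmx (rho%:M - delmx j (Bmx A p)) k b.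
Proof.
have rho_gt0 := radius_gt0; have U0 := delmx_resolvent_unitmx j.
rewrite /resolvent_ratio_deriv; set N0 := invmx _; set C := rho%:M - _; set D := diag_mx (perron_del j)^T.
have UD : D \in unitmx.
  by rewrite unitmxE det_diag unitfE; apply/prodf_neq0 => i _; rewrite mxE lt0r_neq0 ?perron_del_gt0.
have UC : C \in unitmx.
  have : rho^-1 *: (D *m C) \in unitmx by rewrite -delmx_Bmx_conj unitmx_mul U0 UD.
  by rewrite unitmxZ ?unitfE ?invr_eq0 ?lt0r_neq0 // unitmx_mul UD.
have N0D : N0 *m D = rho *: (D *m invmx C).
  have : N0 *m ((1%:M - rho^-1 *: delmx j A) *m D) *m invmx C = D *m invmx C.
    by rewrite mulmxA mulVmx // mul1mx.
  rewrite delmx_Bmx_conj -scalemxAr -scalemxAl -!mulmxA mulmxV // mulmx1 => <-.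
  by rewrite scalerA mulfV ?lt0r_neq0 // scale1r.
have perronD : perron_del j = D *m const_mx 1.
  by apply/matrixP => a b; rewrite mul_diag_mx !mxE mulr1.
rewrite delmx_resolvent_offcol -scalemxAr {1}perronD mulmxA N0D -scalemxAl -mulmxA.
rewrite scalerA mxE mul_diag_mx !mxE.
under eq_bigr do rewrite mxE mulr1.
by rewrite expr2; field; rewrite lt0r_neq0 ?perron_gt0.
Qed.

Lemma resolvent_ratio_rho j : resolvent_ratio j rho^-1 = (p j 0)^-1 *: perron_del j.
Proof.
have rho_neq0 := lt0r_neq0 radius_gt0.
by rewrite /resolvent_ratio delmx_resolvent_offcol scalerA mulrA mulVf // mul1r.
Qed.

Lemma resolvent_ratio_rho_gt0 j k : 0 < resolvent_ratio j rho^-1 k 0.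
Proof. by rewrite resolvent_ratio_rho mxE mulrC divr_gt0 ?perron_del_gt0 ?perron_gt0. Qed.

Lemma cvg_walk_delmx_resolvent j (k l : 'I_n.-1) :
  (1%:M - walk_t rho a *: delmx j A) k l @[a --> +oo] --> (1%:M - rho^-1 *: delmx j A) k l.
Proof.
rewrite !mxE; under eq_cvg do rewrite !mxE.
by apply: cvgB; [exact: cvg_cst | apply: cvgMr_tmp; exact: walk_t_cvg _ radius_gt0].
Qed.

Lemma near_walk_delmx_unitmx j :
  \forall a \near +oo, (1%:M - walk_t rho a *: delmx j A) \in unitmx.
Proof.
exact: near_unitmx (cvg_walk_delmx_resolvent j) (delmx_resolvent_unitmx j).
Qed.

Lemma resolvent_ratio_expansion j k :
  exists2 v : R -> R,
    v a @[a --> +oo] --> resolvent_ratio_deriv j k 0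
  & \forall a \near +oo, resolvent_ratio j rho^-1 k 0 - resolvent_ratio j (walk_t rho a) k 0 =
                         (rho^-1 - walk_t rho a) * v a.
Proof.
have U0 := delmx_resolvent_unitmx j; rewrite /resolvent_ratio_deriv.
set N0 := invmx _; set c := offcol j A; set A' := delmx j A.
exists (fun a => (N0 *m c + walk_t rho a *: (invmx (1%:M - walk_t rho a *: A') *m (A' *m (N0 *m c)))) k 0).
  rewrite -resolvent_sqrE // mxE; under eq_cvg do rewrite mxE.
  apply: cvgD; first exact: cvg_cst.
  rewrite mxE; under eq_cvg do rewrite mxE.
  apply: cvgM; first exact: walk_t_cvg _ radius_gt0.
  apply: (cvg_mulmxr (X := fun a => invmx (1%:M - walk_t rho a *: A'))).
  exact: cvg_invmx (cvg_walk_delmx_resolvent j) U0.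
near=> a; have Ua : (1%:M - walk_t rho a *: A') \in unitmx by near: a; exact: near_walk_delmx_unitmx.
rewrite -opprB -[rho^-1 - _]opprB mulNr; congr (- _).
have -> : resolvent_ratio j (walk_t rho a) k 0 - resolvent_ratio j rho^-1 k 0 =
    (resolvent_ratio j (walk_t rho a) - resolvent_ratio j rho^-1) k 0 by rewrite !mxE.
by rewrite /resolvent_ratio scaled_resolventB // mxE.
Unshelve. all: by end_near.
Qed.

Lemma walk_gap_cvg0 : rho^-1 - walk_t rho a @[a --> +oo] --> 0.
Proof. by rewrite -(subrr rho^-1); apply: cvgB; [exact: cvg_cst | exact: walk_t_cvg _ radius_gt0]. Qed.

Lemma resolvent_ratio_cvg j k :
  resolvent_ratio j (walk_t rho a) k 0 @[a --> +oo] --> resolvent_ratio j rho^-1 k 0.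
Proof.
have [v v_cvg ratioE] := resolvent_ratio_expansion j k.
exact: cvg_subr_eq_mul walk_gap_cvg0 v_cvg ratioE.
Qed.

Lemma resolvent_ratio_lnB_cvg j k :
  (ln (resolvent_ratio j rho^-1 k 0) - ln (resolvent_ratio j (walk_t rho a) k 0)) /
    (rho^-1 - walk_t rho a) @[a --> +oo] -->
  resolvent_ratio_deriv j k 0 / resolvent_ratio j rho^-1 k 0.
Proof.
have [v v_cvg ratioE] := resolvent_ratio_expansion j k.
apply: cvg_lnB_div (resolvent_ratio_rho_gt0 j k) (resolvent_ratio_cvg j k) v_cvg _.
near=> a; split; last by near: a.
have /andP [_ t_lt] : 0 < walk_t rho a < rho^-1 by near: a; exact: near_walk_t _ radius_gt0.
by rewrite subr_gt0.
Unshelve. all: by end_near.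
Qed.

Lemma resolvent_sym t (k l : 'I_n) :
  invmx (1%:M - t *: A) k l = invmx (1%:M - t *: A) l k.
Proof.
apply: invmx_sym; case: adjA => AT _.
by rewrite linearB /= linearZ /= trmx1 AT.
Qed.

Lemma walk_log_ratioE {t} {i j : 'I_n} {i' j' : 'I_n.-1} :
  i = lift j i' -> j = lift i j' -> 0 < t < rho^-1 ->
  (1%:M - t *: delmx j A) \in unitmx -> (1%:M - t *: delmx i A) \in unitmx ->
  0 < resolvent_ratio j t i' 0 -> 0 < resolvent_ratio i t j' 0 ->
  (ln (invmx (1%:M - t *: A) i i) + ln (invmx (1%:M - t *: A) j j)) / 2
    - ln (invmx (1%:M - t *: A) i j) =
  ((ln (resolvent_ratio j rho^-1 i' 0) - ln (resolvent_ratio j t i' 0)) +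
   (ln (resolvent_ratio i rho^-1 j' 0) - ln (resolvent_ratio i t j' 0))) / 2.
Proof.
move=> iE jE t_bounds Uj Ui rj_gt0 ri_gt0.
have U := resolvent_unitmx t_bounds; set Rt := invmx _.
have Rjj_gt0 : 0 < Rt j j by apply: lt_le_trans (resolvent_diag_ge1 j t_bounds).
have Rii_gt0 : 0 < Rt i i by apply: lt_le_trans (resolvent_diag_ge1 i t_bounds).
have ln_ij : ln (Rt i j) = ln (resolvent_ratio j t i' 0) + ln (Rt j j).
  by rewrite {1}iE resolvent_liftE // -/(resolvent_ratio j t) lnM ?posrE.
have ln_ji : ln (Rt i j) = ln (resolvent_ratio i t j' 0) + ln (Rt i i).
  by rewrite resolvent_sym {1}jE resolvent_liftE // -/(resolvent_ratio i t) lnM ?posrE.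
have ln_rho0 : ln (resolvent_ratio j rho^-1 i' 0) + ln (resolvent_ratio i rho^-1 j' 0) = 0.
  rewrite -lnM ?posrE ?resolvent_ratio_rho_gt0 // !resolvent_ratio_rho !mxE -iE -jE.
  have pi_neq0 := lt0r_neq0 (perron_gt0 i); have pj_neq0 := lt0r_neq0 (perron_gt0 j).
  by rewrite -mulrA (mulrA (p i 0)) mulfV // mul1r mulVf // ln1.
lra.
Qed.

Lemma long_walk_limitE {i j : 'I_n} {i' j' : 'I_n.-1} :
  i = lift j i' -> j = lift i j' ->
  2 / n%:R / rho ^+ 2 *
    ((resolvent_ratio_deriv j i' 0 / resolvent_ratio j rho^-1 i' 0 +
      resolvent_ratio_deriv i j' 0 / resolvent_ratio i rho^-1 j' 0) / 2) =
  n%:R^-1 * (rowsum_at j i (invmx (rho%:M - delmx j (Bmx A p)))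
           + rowsum_at i j (invmx (rho%:M - delmx i (Bmx A p)))).
Proof.
move=> iE jE; set Yj := invmx (rho%:M - _); set Yi := invmx (rho%:M - _).
have -> : rowsum_at j i Yj = \sum_b Yj i' b by rewrite iE rowsum_at_lift.
have -> : rowsum_at i j Yi = \sum_b Yi j' b by rewrite jE rowsum_at_lift.
rewrite !resolvent_ratio_derivE !resolvent_ratio_rho !mxE -iE -jE -/Yi -/Yj.
have rho_neq0 := lt0r_neq0 radius_gt0.
have pi_neq0 := lt0r_neq0 (perron_gt0 i); have pj_neq0 := lt0r_neq0 (perron_gt0 j).
have n_neq0 : n%:R != 0 :> R by rewrite pnatr_eq0 -lt0n (ltn_trans _ n_gt1).
by field; rewrite pi_neq0 pj_neq0 rho_neq0 n_neq0.
Qed.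

Lemma walk_dist_cvgy (i j : 'I_n) : i != j ->
  walk_dist A rho alpha i j @[alpha --> +oo] -->
    n%:R^-1 * (rowsum_at j i (invmx (rho%:M - delmx j (Bmx A p)))
             + rowsum_at i j (invmx (rho%:M - delmx i (Bmx A p)))).
Proof.
move=> neq_ij.
have [i' iE] : exists i', i = lift j i'.
  by case: (unliftP j i) => [i' ->|iE]; [exists i' | rewrite iE eqxx in neq_ij].
have [j' jE] : exists j', j = lift i j'.
  by case: (unliftP i j) => [j' ->|jE]; [exists j' | rewrite jE eqxx in neq_ij].
rewrite -(long_walk_limitE iE jE).
refine (cvg_trans (near_eq_cvg _) (cvgM (walk_theta_gap_cvg _ radius_gt0 (ltnW n_gt1))
  (cvgMr_tmp (b := 2^-1) (cvgD (resolvent_ratio_lnB_cvg j i') (resolvent_ratio_lnB_cvg i j'))))).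
near=> a.
have t_bounds : 0 < walk_t rho a < rho^-1 by near: a; exact: near_walk_t _ radius_gt0.
have Uj : (1%:M - walk_t rho a *: delmx j A) \in unitmx by near: a; exact: near_walk_delmx_unitmx.
have Ui : (1%:M - walk_t rho a *: delmx i A) \in unitmx by near: a; exact: near_walk_delmx_unitmx.
have rj_gt0 : 0 < resolvent_ratio j (walk_t rho a) i' 0.
  by near: a; exact: (cvgr_gt _ (resolvent_ratio_cvg j i') _ (resolvent_ratio_rho_gt0 j i')).
have ri_gt0 : 0 < resolvent_ratio i (walk_t rho a) j' 0.
  by near: a; exact: (cvgr_gt _ (resolvent_ratio_cvg i j') _ (resolvent_ratio_rho_gt0 i j')).
rewrite /walk_dist /= -/(walk_t rho a) -/(walk_theta n a).
rewrite (walk_log_ratioE iE jE t_bounds Uj Ui rj_gt0 ri_gt0).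
have t_rho_lt1 : walk_t rho a * rho < 1.
  by rewrite -ltr_pdivlMr ?radius_gt0 // div1r; case/andP: t_bounds.
by rewrite addrfctE /=; field; rewrite lt0r_neq0 ?radius_gt0 //= mulNr subr_eq0 gt_eqF.
Unshelve. all: by end_near.
Qed.

End PerronResolvent.

Theorem corollary2 (R : realType) (n : nat) (A : 'M[R]_n) (rho : R) (p : 'cV[R]_n) :
  (1 < n)%N ->
  weighted_adjacency A -> connected_graph A ->
  spectral_radius A rho -> perron_vector A rho p ->
  forall i j : 'I_n, i != j ->
  walk_dist A rho alpha i j @[alpha --> +oo] -->
    n%:R^-1 * (rowsum_at j i (invmx (rho%:M - delmx j (Bmx A p)))
             + rowsum_at i j (invmx (rho%:M - delmx i (Bmx A p)))).
Proof.
move=> n_gt1 adjA connA radiusA perronA i j neq_ij.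
exact: walk_dist_cvgy.
Qed.
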